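(* Let $k$ be a positive integer and let $p(k)$ be the smallest prime strictly larger than $k$. Suppose $p(k)=k+3$ and $p(k)\equiv 11 \pmod{12}$. Then $\omega(\mathcal F_{\leqslant k})=\chi(\mathcal F_{\leqslant k})=1+p(k)$.
   Context: The vertex set $V$ consists of all reduced fractions $p/q$ with $p,q\in\mathbb Z$, $\gcd(p,q)=1$, together with $1/0$; here $p/q$ and $(-p)/(-q)$ denote the same vertex. For vertices define $d(p/q,a/b)=|pb-qa|$ (which is $\ge1$ for distinct vertices). The graph $\mathcal F_{\leqslant k}$ has vertex set $V$, with an edge between distinct vertices $p/q$ and $a/b$ exactly when $d(p/q,a/b)\le k$. $\omega$ and $\chi$ denote clique number and chromatic number. *)

From mathcomp Require Import all_boot all_order all_algebra.
Set Implicit Arguments. Unset Strict Implicit. Unset Printing Implicit Defensive.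
Import Order.TTheory GRing.Theory Num.Theory.
Local Open Scope ring_scope.

(* A vertex p/q is stored by its canonical representative (p,q) with
   gcd(p,q)=1 and either q>0, or q=0 and p=1 (the vertex 1/0).  This
   identifies p/q with (-p)/(-q). *)
Definition canon (x : int * int) : bool :=
  coprimez x.1 x.2 && ((0 < x.2) || ((x.2 == 0) && (x.1 == 1))).

Definition vert := {x : int * int | canon x}.

Definition num (v : vert) : int := (sval v).1.
Definition den (v : vert) : int := (sval v).2.

Definition dist (u v : vert) : nat := absz (num u * den v - den u * num v)%R.

Definition adjF (k : nat) (u v : vert) : bool := (u != v) && (dist u v <= k)%N.

Definition is_clique (k : nat) (s : seq vert) : Prop :=
  uniq s /\ forall u v, u \in s -> v \in s -> u != v -> adjF k u v.

Definition clique_number_is (k n : nat) : Prop :=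
  (exists s, is_clique k s /\ size s = n) /\
  (forall s, is_clique k s -> (size s <= n)%N).

Definition proper_coloring (k m : nat) (c : vert -> 'I_m) : Prop :=
  forall u v, adjF k u v -> c u != c v.

Definition chromatic_number_is (k n : nat) : Prop :=
  (exists c : vert -> 'I_n, proper_coloring k c) /\
  (forall m (c : vert -> 'I_m), proper_coloring k c -> (n <= m)%N).

Definition next_prime (k p : nat) : Prop :=
  [/\ prime p, (k < p)%N & forall m, (k < m)%N -> (m < p)%N -> ~~ prime m].

(* Write p = 12t + 11, so k = 12t + 8.  The 12t + 12 fractions 1/0, a/1 with
   0 <= a <= 7t+5, a/2 with a odd and 4t+3 <= a <= 10t+7, and a/3 with 3 not
   dividing a and 9t+7 <= a <= 12t+8 are pairwise at distance at most k, which
   gives a clique.  Conversely, colour a/b by its image in the projective line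
   over F_p, which has p + 1 points: two vertices of the same colour are at a
   distance divisible by p, hence, being distinct, at distance at least p > k. *)

From mathcomp Require Import all_boot all_order all_algebra.
From mathcomp Require Import zify.
Set Implicit Arguments. Unset Strict Implicit. Unset Printing Implicit Defensive.
Import Order.TTheory GRing.Theory Num.Theory.
Local Open Scope ring_scope.

Lemma coprime_numq_denq (a b : int) : coprimez a b -> 0 < b ->
  (numq (a%:~R / b%:~R), denq (a%:~R / b%:~R)) = (a, b).
Proof.
move=> cab b_gt0; rewrite coprimeq_num // coprimeq_den // gtr0_sg // mul1r.
by rewrite gt_eqF // gtr0_norm.
Qed.

Lemma canon_inj (x y : int * int) : canon x -> canon y ->
  x.1 * y.2 = x.2 * y.1 -> x = y.
Proof.
case: x y => [a b] [c d]; rewrite /canon /= => /andP[cab +] /andP[ccd +] E.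
case/orP=> [b_gt0|/andP[/eqP b0 /eqP a1]]; case/orP=> [d_gt0|/andP[/eqP d0 /eqP c1]].
- have q_eq : a%:~R / b%:~R = c%:~R / d%:~R :> rat.
    apply/eqP; rewrite eqr_div ?intr_eq0 ?(gt_eqF b_gt0) ?(gt_eqF d_gt0) //.
    by rewrite -!intrM E mulrC.
  by rewrite -coprime_numq_denq // q_eq coprime_numq_denq.
- by move: E; rewrite d0 c1 mulr0 mulr1 => b0; move: b_gt0; rewrite -b0 ltxx.
- by move: E; rewrite b0 a1 mul1r mul0r => d0; move: d_gt0; rewrite d0 ltxx.
- by rewrite a1 b0 c1 d0.
Qed.

Lemma dist_gt0 (u v : vert) : u != v -> (0 < dist u v)%N.
Proof.
apply: contraNT; rewrite -eqn0Ngt absz_eq0 subr_eq0 => /eqP E.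
by apply/eqP/val_inj/canon_inj; [exact: valP | exact: valP | ].
Qed.

Lemma Fp_intr_eq0 (p : nat) (z : int) : prime p ->
  (z%:~R == 0 :> 'F_p) = (p %| `|z|)%N.
Proof.
move=> /pchar_Fp pF; case: z => n.
  by rewrite (dvdn_pcharf pF).
by rewrite NegzE mulrNz oppr_eq0 (dvdn_pcharf pF).
Qed.

Section ProjectiveColoring.

Variable p : nat.
Hypothesis p_pr : prime p.

Lemma ltn_Fp (x : 'F_p) : (x < p)%N.
Proof. by rewrite -[p in (_ < p)%N](Fp_cast p_pr) ltn_ord. Qed.

Lemma val_inord_Fp (x : 'F_p) : (inord x : 'I_p.+1) = x :> nat.
Proof. exact/inordK/leqW/ltn_Fp. Qed.

Lemma inord_Fp_neq_max (x : 'F_p) : (inord x : 'I_p.+1) != ord_max.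
Proof. by rewrite -val_eqE /= val_inord_Fp neq_ltn ltn_Fp. Qed.

Lemma inord_Fp_inj : injective (fun x : 'F_p => inord x : 'I_p.+1).
Proof. by move=> x y /(congr1 val); rewrite /= !val_inord_Fp => /val_inj. Qed.

(* The point at infinity of the projective line over [F_p] is [ord_max]. *)
Definition proj_Fp (v : vert) : 'I_p.+1 :=
  let a : 'F_p := (num v)%:~R in
  let b : 'F_p := (den v)%:~R in
  if b == 0 then ord_max else inord (a / b).

Lemma proj_Fp_eq_dvd (u v : vert) : proj_Fp u = proj_Fp v -> (p %| dist u v)%N.
Proof.
rewrite /dist -Fp_intr_eq0 // rmorphB !rmorphM /= subr_eq0 /proj_Fp.
case: eqP => [-> | /eqP bu]; case: eqP => [-> | /eqP bv] //.
- by rewrite !mulr0 mul0r.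
- by move/esym/eqP; rewrite (negbTE (inord_Fp_neq_max _)).
- by move/eqP; rewrite (negbTE (inord_Fp_neq_max _)).
move/inord_Fp_inj/eqP.
by rewrite eqr_div // mulrC [_ * _%:~R]mulrC.
Qed.

Lemma proj_Fp_proper (k : nat) : (k < p)%N -> proper_coloring k proj_Fp.
Proof.
move=> lt_kp u v /andP[neq_uv dist_le]; apply: contraTneq dist_le => /proj_Fp_eq_dvd.
by move/(dvdn_leq (dist_gt0 neq_uv)); lia.
Qed.

End ProjectiveColoring.

Lemma clique_size_le (k m : nat) (c : vert -> 'I_m) (s : seq vert) :
  proper_coloring k c -> is_clique k s -> (size s <= m)%N.
Proof.
move=> c_proper [s_uniq s_adj].
have c_inj : {in s &, injective c}.
  move=> u v u_s v_s; apply: contra_eq => neq_uv.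
  exact: c_proper (s_adj _ _ u_s v_s neq_uv).
rewrite -(size_map c) -(card_uniqP _) ?map_inj_in_uniq //.
by apply: leq_trans (max_card _) _; rewrite card_ord.
Qed.

Lemma clique_coloring_numbers (k n : nat) (s : seq vert) (c : vert -> 'I_n) :
  is_clique k s -> size s = n -> proper_coloring k c ->
  clique_number_is k n /\ chromatic_number_is k n.
Proof.
move=> s_clique s_size c_proper; split; split.
- by exists s.
- by move=> s' /(clique_size_le c_proper).
- by exists c.
- by move=> m c' /clique_size_le/(_ s_clique); rewrite s_size.
Qed.

Local Open Scope nat_scope.

Definition in_window (t : nat) (x : nat * nat) : Prop :=
  let: (a, b) := x in
  [\/ a = 1 /\ b = 0,
      b = 1 /\ a <= 7 * t + 5,
      [/\ b = 2, ~~ (2 %| a) & 4 * t + 3 <= a <= 10 * t + 7]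
    | [/\ b = 3, ~~ (3 %| a) & 9 * t + 7 <= a <= 12 * t + 8]].

Lemma window_canon (t : nat) (x : nat * nat) :
  in_window t x -> canon (x.1%:Z, x.2%:Z).
Proof.
case: x => a b [[-> ->] | [-> _] | [-> a_odd _] | [-> a_3 _]] //;
  rewrite /canon /= andbT -[coprimez _ _]/(coprime a _) ?coprimen1 //;
  by rewrite coprime_sym prime_coprime.
Qed.

Lemma window_dist (t : nat) (x y : nat * nat) :
  in_window t x -> in_window t y ->
  `|(x.1%:Z * y.2%:Z - x.2%:Z * y.1%:Z)%R| <= 12 * t + 8.
Proof.
case: x y => a b [c d] /=.
by case=> [[-> ->] | [-> ?] | [-> ? ?] | [-> ? ?]];
   case=> [[-> ->] | [-> ?] | [-> ? ?] | [-> ? ?]]; lia.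
Qed.

Definition clique_point (t n : nat) : nat * nat :=
  if n == 0 then (1, 0)
  else if n < 7 * t + 7 then (n - 1, 1)
  else if n < 10 * t + 10 then (4 * t + 3 + 2 * (n - (7 * t + 7)), 2)
  else if n < 11 * t + 11 then (9 * t + 7 + 3 * (n - (10 * t + 10)), 3)
  else (9 * t + 8 + 3 * (n - (11 * t + 11)), 3).

Lemma clique_point_window (t n : nat) :
  n < 12 * t + 12 -> in_window t (clique_point t n).
Proof.
move=> n_lt; rewrite /clique_point.
case: ifP => [_ | /negbT n_neq0]; first exact: Or41.
case: ifP => [n_lt1 | /negbT n_ge1]; first by apply: Or42; lia.
case: ifP => [n_lt2 | /negbT n_ge2]; first by apply: Or43; split; lia.
by case: ifP => [n_lt3 | /negbT n_ge3]; apply: Or44; split; lia.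
Qed.

Lemma clique_point_inj (t n n' : nat) : n < 12 * t + 12 -> n' < 12 * t + 12 ->
  clique_point t n = clique_point t n' -> n = n'.
Proof.
rewrite /clique_point => n_lt n'_lt.
by repeat case: ifP; move=> *;
  repeat match goal with H : (_, _) = (_, _) |- _ => case: H end; lia.
Qed.

Definition clique_vertex (t : nat) (i : 'I_(12 * t + 12)) : vert :=
  let x := clique_point t i in
  exist _ (x.1%:Z, x.2%:Z) (window_canon (clique_point_window (ltn_ord i))).

Definition window_clique (t : nat) : seq vert :=
  map (@clique_vertex t) (enum 'I_(12 * t + 12)).

Lemma size_window_clique (t : nat) : size (window_clique t) = 12 * t + 12.
Proof. by rewrite size_map size_enum_ord. Qed.

Lemma is_clique_window_clique (t : nat) : is_clique (12 * t + 8) (window_clique t).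
Proof.
split.
  rewrite map_inj_uniq ?enum_uniq // => i j /(congr1 sval) [Ei Ej].
  apply/val_inj/(clique_point_inj (ltn_ord i) (ltn_ord j)).
  by rewrite [clique_point t i]surjective_pairing Ei Ej -surjective_pairing.
move=> _ _ /mapP[i _ ->] /mapP[j _ ->] neq_ij; rewrite /adjF neq_ij.
exact: window_dist (clique_point_window (ltn_ord i)) (clique_point_window (ltn_ord j)).
Qed.

Theorem theorem1p3 (k p : nat) :
  (0 < k)%N -> next_prime k p -> p = (k + 3)%N -> p %% 12 = 11 ->
  clique_number_is k p.+1 /\ chromatic_number_is k p.+1.
Proof.
move=> _ [p_pr lt_kp _] def_p p_mod12.
have [t def_k] : exists t, k = 12 * t + 8 by exists (p %/ 12); lia.
rewrite def_k in lt_kp *.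
apply: clique_coloring_numbers (is_clique_window_clique t) _ (proj_Fp_proper p_pr lt_kp).
by rewrite size_window_clique; lia.
Qed.
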